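(* Let $(\tilde\Theta^n_I)$ be a congruent family of covariant $n$-tensor fields on $\mathcal M_+(I)$, $I$ ranging over finite sets. Then there is a congruent family $(\tilde\Psi^n_I)$ of the form $(\tilde\Psi^n_I)_\mu=\sum_{\mathbf P\in\mathbf{Part}(n)}a_{\mathbf P}(\|\mu\|)(\tau^{\mathbf P}_I)_\mu$ with functions $a_{\mathbf P}:(0,\infty)\to\mathbb R$, such that $(\tilde\Theta^n_I-\tilde\Psi^n_I)_{\lambda c_I}=0$ for all finite sets $I$ and all $\lambda>0$.
   Context: $\mathbf{Part}(n)$ is the set of partitions of $\{1,\dots,n\}$. For a finite set $I$: $\mathcal S(I)=\{\sum_{i\in I}x_i\delta_i\}$, $\|\sum x_i\delta_i\|=\sum|x_i|$, $\mathcal M_+(I)=\{\sum\mu_i\delta_i:\mu_i>0\}$ (tangent space $\mathcal S(I)$), $c_I:=\frac1{|I|}\sum_i\delta_i$. A covariant $n$-tensor field on $\mathcal M_+(I)$ is a continuously varying family of $n$-multilinear forms on $\mathcal S(I)$. For $\mu=\sum\mu_i\delta_i$ and $V_k=\sum_iV_k^i\delta_i$, $(\tau^m_I)_\mu(V_1,\dots,V_m)=\sum_i\mu_i^{1-m}V_1^i\cdots V_m^i$, and for $\mathbf P=\{P_1,\dots,P_l\}$, $(\tau^{\mathbf P}_I)_\mu(V_1,\dots,V_n)=\prod_i(\tau^{|P_i|}_I)_\mu((V_j)_{j\in P_i})$. A Markov kernel $K:I\to\mathcal P(I')$ between finite sets is a stochastic matrix $K(i)=\sum_{i'}K^i_{i'}\delta_{i'}$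 with $K_*(\sum x_i\delta_i)=\sum_{i,i'}K^i_{i'}x_i\delta_{i'}$; it is congruent if there is a map $\kappa:I'\to I$ with $K^i_{i'}=0$ whenever $\kappa(i')\ne i$. A family is congruent if $(\Theta_{I'})_{K_*\mu}(K_*V_1,\dots,K_*V_n)=(\Theta_I)_\mu(V_1,\dots,V_n)$ for every congruent Markov kernel $K:I\to\mathcal P(I')$ between finite sets with $K_*(\mathcal M_+(I))\subset\mathcal M_+(I')$. *)

From HB Require Import structures.
From mathcomp Require Import all_boot all_order all_algebra.
From mathcomp Require Import reals.
Set Implicit Arguments. Unset Strict Implicit. Unset Printing Implicit Defensive.
Import Order.TTheory GRing.Theory Num.Theory.
Local Open Scope ring_scope.

(* A finite set I is a finType.  A measure mu = sum_i mu_i delta_i and a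
   signed measure / tangent vector V = sum_i V^i delta_i are both coded by
   their coefficient functions I -> R. *)

Definition posm (R : realType) (I : finType) (mu : I -> R) : Prop :=
  forall i, 0 < mu i.

Definition norm1 (R : realType) (I : finType) (x : I -> R) : R :=
  \sum_(i : I) `|x i|.

Definition cI (R : realType) (I : finType) (lam : R) : I -> R :=
  fun _ => lam / #|I|%:R.

(* The tuple is indexed by 'I_n = {0..n-1}. *)
Definition tfamily (R : realType) (n : nat) : Type :=
  forall I : finType, (I -> R) -> ('I_n -> I -> R) -> R.

Definition upd (R : realType) (n : nat) (I : finType)
  (V : 'I_n -> I -> R) (j : 'I_n) (W : I -> R) : 'I_n -> I -> R :=
  fun k => if k == j then W else V k.

Definition multilinear_family (R : realType) (n : nat) (Th : tfamily R n) : Prop :=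
  forall (I : finType) (mu : I -> R), posm mu ->
  forall (V : 'I_n -> I -> R) (j : 'I_n) (a b : R) (W W' : I -> R),
    Th I mu (upd V j (fun i => a * W i + b * W' i))
    = a * Th I mu (upd V j W) + b * Th I mu (upd V j W').

(* mu |-> (Theta_I)_mu varies continuously on M_+(I) (for multilinear forms
   on the finite-dimensional space S(I) this is continuity of
   mu |-> (Theta_I)_mu(V) for every fixed V). *)
Definition continuous_family (R : realType) (n : nat) (Th : tfamily R n) : Prop :=
  forall (I : finType) (mu : I -> R), posm mu ->
  forall (V : 'I_n -> I -> R) (e : R), 0 < e ->
  exists2 d : R, 0 < d &
    forall mu' : I -> R, posm mu' -> (forall i, `|mu' i - mu i| < d) ->
      `|Th I mu' V - Th I mu V| < e.

Definition tensor_field_family (R : realType) (n : nat) (Th : tfamily R n) : Prop :=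
  multilinear_family Th /\ continuous_family Th.

(* Markov kernels K : I -> P(I') as stochastic matrices K i i' = K^i_{i'} *)
Definition markov (R : realType) (I I' : finType) (K : I -> I' -> R) : Prop :=
  (forall i i', 0 <= K i i') /\ (forall i, \sum_(i' : I') K i i' = 1).

Definition push (R : realType) (I I' : finType) (K : I -> I' -> R)
  (x : I -> R) : I' -> R :=
  fun i' => \sum_(i : I) K i i' * x i.

Definition congruent_kernel (R : realType) (I I' : finType)
  (K : I -> I' -> R) : Prop :=
  exists kappa : I' -> I, forall i i', kappa i' != i -> K i i' = 0.

Definition congruent_family (R : realType) (n : nat) (Th : tfamily R n) : Prop :=
  forall (I I' : finType) (K : I -> I' -> R),
    markov K -> congruent_kernel K ->
    (forall mu : I -> R, posm mu -> posm (push K mu)) ->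
    forall (mu : I -> R) (V : 'I_n -> I -> R), posm mu ->
      Th I' (push K mu) (fun j => push K (V j)) = Th I mu V.

Definition tau_block (R : realType) (n : nat) (I : finType) (mu : I -> R)
  (B : {set 'I_n}) (V : 'I_n -> I -> R) : R :=
  \sum_(i : I) mu i ^ (1 - (#|B|)%:Z) * \prod_(j in B) V j i.

Definition tauP (R : realType) (n : nat) (I : finType) (P : {set {set 'I_n}})
  (mu : I -> R) (V : 'I_n -> I -> R) : R :=
  \prod_(B in P) tau_block mu B V.

(* Part(n): partitions of {1..n} (here {0..n-1} = 'I_n) *)
Definition Part (n : nat) : pred {set {set 'I_n}} :=
  fun P => partition P [set: 'I_n].

Definition Psi (R : realType) (n : nat) (a : {set {set 'I_n}} -> R -> R)
  : tfamily R n :=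
  fun I mu V => \sum_(P | Part P) a P (norm1 mu) * tauP P mu V.
Arguments Psi [R n] a I _ _.
Arguments cI [R] I lam _.

(* At a uniform measure [lam c_I], a multilinear congruent family is determined
   by its values on tuples of Dirac vectors [(delta_(t 1), ..., delta_(t n))], and
   invariance under permutations of [I] makes such a value depend only on the
   partition of {1, ..., n} into the fibres of [t].  On [tau^P] these values are
   [lam]-dependent weights times the indicator that [P] refines that partition, so
   on the fixed set [J] of subsets of {1, ..., n} the coefficients [a_P(lam)] are
   found by solving a triangular system for refinement.  The difference
   [Theta - Psi] then vanishes at [lam c_J]; the uniform kernel [J -> J x I] spreads
   this to [lam c_(J x I)], by induction from the finest partitions up, and the
   uniform kernel [I -> J x I] brings it down to [lam c_I]. *)

From HB Require Import structures.
From mathcomp Require Import all_boot all_order all_algebra.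
From mathcomp Require Import reals boolp fingroup perm ring.
Set Implicit Arguments. Unset Strict Implicit. Unset Printing Implicit Defensive.
Import Order.TTheory GRing.Theory Num.Theory.
Local Open Scope ring_scope.

Lemma prod_nat_bool (R : comNzRingType) (T : finType) (A : {pred T}) (P : pred T) :
  \prod_(j in A) (P j)%:R = [forall j in A, P j]%:R :> R.
Proof.
rewrite -big_andE; elim/big_rec2: _ => // j x b _ ->.
by case: (P j); rewrite ?mul1r ?mul0r.
Qed.

(** * Multilinear expansion *)

Section Expansion.
Variable R : realType.

Definition delta (I : finType) (x : I) : I -> R := fun i => (i == x)%:R.

Definition deltas n (I : finType) (t : 'I_n -> I) : 'I_n -> I -> R :=
  fun j => delta (t j).

Lemma sum_delta (I : finType) (x : I) (F : I -> R) :
  \sum_i F i * delta i x = F x.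
Proof.
rewrite (bigD1 x) //= /delta eqxx mulr1 big1 ?addr0 // => i.
by rewrite eq_sym => /negbTE ->; rewrite mulr0.
Qed.

Lemma prod_delta n (I : finType) (y : 'I_n -> I) (f : {ffun 'I_n -> I}) :
  \prod_j delta (y j) (f j) = delta f [ffun j => y j].
Proof.
rewrite /delta; case: eqP => [<-|/eqP neq]; first by apply: big1 => j _; rewrite ffunE eqxx.
have [j neqj] : exists j, f j != y j.
  apply/existsP; apply: contraR neq; rewrite negb_exists => /forallP eqf.
  by apply/eqP/ffunP => j; rewrite ffunE; apply/esym/eqP; move: (eqf j); rewrite negbK.
by rewrite (bigD1 j) //= (negbTE neqj) mul0r.
Qed.

Variables (n : nat) (Th : tfamily R n).
Arguments Th : clear implicits.
Variables (I : finType) (mu : I -> R).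
Hypotheses (Th_multilinear : multilinear_family Th) (mu_pos : posm mu).

Lemma multilinear_sum (T : Type) (r : seq T) (c : T -> R) (W : T -> I -> R) V j :
  Th I mu (upd V j (fun i => \sum_(x <- r) c x * W x i))
  = \sum_(x <- r) c x * Th I mu (upd V j (W x)).
Proof.
elim: r => [|x r IH].
  have -> : (fun i => \sum_(x <- [::]) c x * W x i) = (fun i => 0 * 0 + 0 * 0).
    by apply: funext => i; rewrite big_nil mul0r addr0.
  by rewrite (Th_multilinear mu_pos V j 0 0 (fun _ => 0) (fun _ => 0)) !mul0r addr0 big_nil.
rewrite big_cons -IH -[X in _ + X]mul1r -Th_multilinear //.
by congr (Th _ _ (upd _ _ _)); apply: funext => i; rewrite big_cons mul1r.
Qed.

Lemma multilinear_expand_slot V j :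
  Th I mu V = \sum_i V j i * Th I mu (upd V j (delta i)).
Proof.
rewrite -multilinear_sum; congr (Th _ _ _); apply: funext => k; rewrite /upd.
by case: eqP => // ->; apply: funext => i; rewrite sum_delta.
Qed.

Lemma multilinear_expand V :
  Th I mu V = \sum_(f : {ffun 'I_n -> I}) (\prod_j V j (f j)) * Th I mu (deltas f).
Proof.
suff expand_from (k : nat) : forall V,
    (forall j : 'I_n, (k <= j)%N -> exists x, V j = delta x) ->
    Th I mu V = \sum_(f : {ffun 'I_n -> I}) (\prod_j V j (f j)) * Th I mu (deltas f).
  by apply: (expand_from n) => j; rewrite leqNgt ltn_ord.
elim: k => [|k IH] {}V basisV.
  have [y Vy] := fin_all_exists (fun j => basisV j (leq0n j)).
  have -> : V = deltas y by apply: funext => j; rewrite Vy.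
  under eq_bigr => f _ do rewrite prod_delta mulrC.
  by rewrite sum_delta; congr (Th _ _ _); apply: funext => j; rewrite /deltas ffunE.
have [ltkn|lenk] := ltnP k n; last first.
  by apply: IH => j lekj; have := leq_trans lenk lekj; rewrite leqNgt ltn_ord.
set jk := Ordinal ltkn.
have basis_upd i (j : 'I_n) : (k <= j)%N -> exists x, upd V jk (delta i) j = delta x.
  rewrite /upd; case: eqP => [_|/eqP neq] lekj; first by exists i.
  apply: basisV; rewrite ltn_neqAle lekj andbT; apply: contra neq => /eqP ekj.
  by apply/eqP/val_inj; rewrite /= ekj.
rewrite (multilinear_expand_slot V jk).
under eq_bigr => i _ do rewrite (IH _ (basis_upd i)) mulr_sumr.
rewrite exchange_big; apply: eq_bigr => f _ /=.
have upd_other i j : j != jk -> upd V jk (delta i) j (f j) = V j (f j).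
  by rewrite /upd => /negbTE ->.
under eq_bigr => i _.
  rewrite (bigD1 jk) //= (eq_bigr _ (upd_other i)) {1}/upd eqxx -!mulrA mulrA.
  over.
by rewrite -mulr_suml sum_delta [in RHS](bigD1 jk) //= mulrA.
Qed.

End Expansion.

Section UniformMeasures.
Variable R : realType.

Lemma posm_cI (I : finType) (lam : R) : 0 < lam -> (0 < #|I|)%N -> posm (cI I lam).
Proof. by move=> lam_gt0 I_gt0 i; rewrite /cI divr_gt0 ?ltr0n. Qed.

Lemma norm1_cI (I : finType) (lam : R) : 0 <= lam -> (0 < #|I|)%N -> norm1 (cI I lam) = lam.
Proof.
move=> lam_ge0 I_gt0; rewrite /norm1 /cI (eq_bigr (fun _ => lam / #|I|%:R)) => [|i _].
  by rewrite sumr_const -[_ / _ *+ _]mulr_natr divfK // pnatr_eq0 -lt0n.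
by rewrite ger0_norm // divr_ge0 ?ler0n.
Qed.

End UniformMeasures.

(** * Congruent kernels along uniform fibrations *)

Section FibreKernel.
Variables (R : realType) (I I' : finType) (kappa : I' -> I) (m : nat).

Definition fibre_kernel : I -> I' -> R := fun i i' => delta R i (kappa i') / m%:R.

Lemma push_fibre_kernel x : push fibre_kernel x = fun i' => x (kappa i') / m%:R.
Proof.
apply: funext => i'; rewrite /push -sum_delta mulr_suml.
by apply: eq_bigr => i _; rewrite mulrC mulrA.
Qed.

Lemma fibre_kernel_congruent : congruent_kernel fibre_kernel.
Proof. by exists kappa => i i' neq; rewrite /fibre_kernel /delta (negbTE neq) mul0r. Qed.

Hypotheses (m_gt0 : (0 < m)%N) (card_fibre : forall i, #|[pred i' | kappa i' == i]| = m).

Lemma fibre_kernel_markov : markov fibre_kernel.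
Proof.
split=> [i i'|i]; first by rewrite divr_ge0 ?ler0n.
have sum_fibre : \sum_i' delta R i (kappa i') = m%:R.
  rewrite -(card_fibre i) -sum1_card natr_sum [RHS]big_mkcond /=.
  by apply: eq_bigr => i' _; rewrite /delta inE; case: eqP.
by rewrite -mulr_suml sum_fibre mulfV // pnatr_eq0 -lt0n.
Qed.

Lemma congruent_fibre (n : nat) (Th : tfamily R n) (mu : I -> R) V :
  congruent_family Th -> posm mu ->
  Th I' (fun i' => mu (kappa i') / m%:R) (fun j i' => V j (kappa i') / m%:R) = Th I mu V.
Proof.
move=> Th_congr mu_pos; rewrite -(Th_congr _ _ _ fibre_kernel_markov fibre_kernel_congruent).
- by rewrite push_fibre_kernel; congr (Th _ _ _); apply: funext => j; rewrite push_fibre_kernel.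
- by move=> nu nu_pos i'; rewrite push_fibre_kernel divr_gt0 ?ltr0n.
- exact: mu_pos.
Qed.

Lemma cI_fibre (lam : R) : #|I'| = (#|I| * m)%N ->
  (fun i' => cI I lam (kappa i') / m%:R) = cI I' lam.
Proof. by move=> cardI'; apply: funext => i'; rewrite /cI cardI' natrM invfM mulrA. Qed.

End FibreKernel.

Lemma card_fibre_perm (I : finType) (s : {perm I}) i : #|[pred i' | s i' == i]| = 1%N.
Proof.
by rewrite -(card1 (s^-1 i)%g); apply: eq_card => i'; rewrite !inE (canF_eq (permK s)).
Qed.

Lemma card_fibre_fst (J I : finType) (y : J) : #|[pred p : J * I | p.1 == y]| = #|I|.
Proof.
rewrite -[RHS]mul1n -(card1 y) -cardX; apply: eq_card => -[a b].
by rewrite !inE andbT.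
Qed.

Lemma card_fibre_snd (J I : finType) (x : I) : #|[pred p : J * I | p.2 == x]| = #|J|.
Proof.
rewrite -[RHS]muln1 -(card1 x) -cardX; apply: eq_card => -[a b].
by rewrite !inE.
Qed.

Definition kerset (A : eqType) n (t : 'I_n -> A) : {set 'I_n * 'I_n} :=
  [set jj | t jj.1 == t jj.2].

Lemma kersetP (A : eqType) n (t : 'I_n -> A) j j' : ((j, j') \in kerset t) = (t j == t j').
Proof. by rewrite inE. Qed.

Lemma kerset_comp (A B : eqType) n (f : A -> B) (t : 'I_n -> A) :
  kerset t \subset kerset (f \o t).
Proof. by apply/subsetP => -[j j']; rewrite !kersetP /= => /eqP ->. Qed.

Lemma perm_of_uniq_seqs (I : finType) (s s' : seq I) :
  uniq s -> uniq s' -> size s = size s' ->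
  exists sigma : {perm I}, forall x0 i, (i < size s)%N -> sigma (nth x0 s i) = nth x0 s' i.
Proof.
move=> uniq_s uniq_s' size_s.
pose complete (u : seq I) := u ++ [seq x <- enum I | x \notin u].
have mem_complete u x : x \in complete u by rewrite mem_cat mem_filter mem_enum andbT orbN.
have uniq_complete u : uniq u -> uniq (complete u).
  move=> uniq_u; rewrite cat_uniq uniq_u filter_uniq ?enum_uniq // andbT.
  by apply/hasPn => x; rewrite mem_filter => /andP [].
have size_complete u : uniq u -> size (complete u) = #|I|.
  move=> uniq_u; rewrite cardT; apply/perm_size/uniq_perm; rewrite ?uniq_complete ?enum_uniq //.
  by move=> x; rewrite mem_complete mem_enum.
pose f x := nth x (complete s') (index x (complete s)).
have index_lt x : (index x (complete s) < size (complete s'))%N.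
  by rewrite size_complete // -(size_complete _ uniq_s) index_mem.
have f_inj : injective f.
  move=> x y; rewrite /f (set_nth_default x y (index_lt y)) => /eqP.
  rewrite nth_uniq ?uniq_complete // => /eqP eq_index.
  by rewrite -(nth_index x (mem_complete s x)) eq_index nth_index.
exists (perm f_inj) => x0 i lt_i; rewrite permE /f index_cat mem_nth // index_uniq //.
by rewrite nth_cat -size_s lt_i; apply: set_nth_default; rewrite -size_s.
Qed.

Lemma perm_of_kerset (I : finType) n (t t' : 'I_n -> I) :
  kerset t = kerset t' -> exists sigma : {perm I}, forall j, sigma (t j) = t' j.
Proof.
move=> eq_ker.
have eq_t j j' : (t j == t j') = (t' j == t' j') by rewrite -!kersetP eq_ker.
pose rep j := odflt j [pick j0 | t j0 == t j].
have t_rep j : t (rep j) = t j by rewrite /rep; case: pickP => [j0 /eqP|].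
have rep_eq j j' : t j = t j' -> rep j = rep j'.
  rewrite /rep => ->; case: pickP => [//|/(_ j')]; by rewrite eqxx.
pose reps := [seq j <- enum 'I_n | rep j == j].
have mem_reps j : (j \in reps) = (rep j == j) by rewrite mem_filter mem_enum andbT.
have t_inj : {in reps &, injective t}.
  by move=> j1 j2; rewrite !mem_reps => /eqP r1 /eqP r2 /rep_eq; rewrite r1 r2.
have t'_inj : {in reps &, injective t'}.
  by move=> j1 j2 r1 r2 /eqP; rewrite -eq_t => /eqP; apply: t_inj.
have uniq_reps : uniq reps by rewrite filter_uniq ?enum_uniq.
have [sigma sigmaE] : exists sigma : {perm I}, forall x0 i, (i < size (map t reps))%N ->
    sigma (nth x0 (map t reps) i) = nth x0 (map t' reps) i.
  by apply: perm_of_uniq_seqs; rewrite ?map_inj_in_uniq ?size_map.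
exists sigma => j.
have rep_in : rep j \in reps by rewrite mem_reps; apply/eqP/rep_eq/t_rep.
have := sigmaE (t j) (index (rep j) reps); rewrite size_map index_mem => /(_ rep_in).
rewrite !(nth_map (rep j)) ?index_mem // nth_index // t_rep => ->.
by apply/eqP; rewrite -eq_t t_rep.
Qed.

Lemma congruent_deltas_kerset (R : realType) n (Th : tfamily R n) (I : finType) (lam : R)
    (t t' : 'I_n -> I) :
  congruent_family Th -> 0 < lam -> (0 < #|I|)%N -> kerset t = kerset t' ->
  Th I (cI I lam) (deltas R t) = Th I (cI I lam) (deltas R t').
Proof.
move=> Th_congr lam_gt0 I_gt0 eq_ker.
have [sigma sigma_t'] := perm_of_kerset (esym eq_ker).
rewrite -(congruent_fibre (m := 1) _ (card_fibre_perm sigma) (deltas R t) Th_congr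
  (posm_cI lam_gt0 I_gt0)) //.
congr (Th _ _ _); first by apply: funext => i; rewrite /cI divr1.
apply: funext => j; apply: funext => i.
by rewrite /deltas /delta divr1 -sigma_t' (inj_eq perm_inj).
Qed.

(** * Partitions and refinement *)

Section Refinement.
Variable n : nat.
Implicit Types P Q : {set {set 'I_n}}.

Lemma PartP P : Part P -> [/\ cover P = [set: 'I_n], trivIset P & set0 \notin P].
Proof. by case/and3P => /eqP. Qed.

Lemma mem_pblockT P j : Part P -> j \in pblock P j.
Proof. by case/PartP => cover_P _ _; rewrite mem_pblock cover_P inE. Qed.

Lemma pblock_memT P j : Part P -> pblock P j \in P.
Proof. by case/PartP => cover_P _ _; rewrite pblock_mem // cover_P inE. Qed.

Lemma Part_pblock P B j : Part P -> B \in P -> j \in B -> pblock P j = B.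
Proof. by case/PartP => _ triv_P _; apply: def_pblock. Qed.

Definition refines P Q := kerset (pblock P) \subset kerset (pblock Q).

Lemma kerset_preim_partition (A : eqType) (t : 'I_n -> A) :
  kerset (pblock (preim_partition t [set: 'I_n])) = kerset t.
Proof.
have eqv : {in [set: 'I_n] & &, equivalence_rel (fun x y => t x == t y)}.
  by move=> x y z _ _ _; split=> // /eqP ->.
case/PartP: (preim_partitionP t [set: 'I_n]) => cover_P triv_P _.
apply/setP => -[j j']; rewrite !kersetP eq_pblock ?cover_P ?inE //.
by rewrite (pblock_equivalence_partition eqv) ?inE.
Qed.

Lemma pblock_imset P : Part P -> pblock P @: [set: 'I_n] = P.
Proof.
move=> P_part; apply/setP => B; apply/imsetP/idP => [[j _ ->]|BP].
  exact: pblock_memT.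
have /set0Pn [j jB] : B != set0 by case/PartP: P_part => _ _; apply: contraNneq => <-.
by exists j; rewrite ?inE ?(Part_pblock P_part BP jB).
Qed.

Lemma kerset_pblock_inj P Q :
  Part P -> Part Q -> kerset (pblock P) = kerset (pblock Q) -> P = Q.
Proof.
move=> P_part Q_part eq_ker.
have pblockE (S : {set {set 'I_n}}) j :
    Part S -> pblock S j = [set j' | (j, j') \in kerset (pblock S)].
  case/PartP => cover_S triv_S _; apply/setP => j'.
  by rewrite inE kersetP eq_pblock // cover_S inE.
rewrite -(pblock_imset P_part) -(pblock_imset Q_part); apply: eq_imset => j.
by rewrite pblockE // eq_ker -pblockE.
Qed.

Lemma refines_lt P Q : Part P -> Part Q -> refines P Q -> P != Q ->
  (#|kerset (pblock P)| < #|kerset (pblock Q)|)%N.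
Proof.
move=> P_part Q_part PQ neq; apply: proper_card; rewrite properEneq -/(refines P Q) PQ andbT.
by apply: contra neq => /eqP /(kerset_pblock_inj P_part Q_part) ->.
Qed.

Lemma blocks_constantE (A : eqType) P (t : 'I_n -> A) : Part P ->
  [forall B in P, [forall j in B, forall j' in B, t j == t j']]
  = (kerset (pblock P) \subset kerset t).
Proof.
move=> P_part; apply/forall_inP/subsetP => [const_t [j j']|sub_t B BP].
  rewrite !kersetP; case/PartP: (P_part) => cover_P triv_P _.
  rewrite eq_pblock ?cover_P ?inE // => j'_in.
  move/forall_inP: (const_t _ (pblock_memT j P_part)) => /(_ j (mem_pblockT j P_part)).
  by move/forall_inP; apply.
apply/forall_inP => j jB; apply/forall_inP => j' j'B; rewrite -kersetP; apply: sub_t.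
by rewrite kersetP (Part_pblock P_part BP jB) (Part_pblock P_part BP j'B).
Qed.

Lemma tau_block_deltas (R : realType) (I : finType) (c : R) (B : {set 'I_n})
    (t : 'I_n -> I) :
  B != set0 -> tau_block (fun _ => c) B (deltas R t)
               = c ^ (1 - #|B|%:Z) * [forall j in B, forall j' in B, t j == t j']%:R.
Proof.
case/set0Pn => j0 j0B; rewrite /tau_block -mulr_sumr; congr (_ * _).
under eq_bigr => i _ do rewrite /deltas /delta prod_nat_bool.
have all_eqE i : [forall j in B, i == t j]
    = (t j0 == i) && [forall j in B, forall j' in B, t j == t j'].
  apply/idP/idP => [/forall_inP eq_i|/andP [/eqP <- /forall_inP const_t]].
    rewrite (eqP (eq_i j0 j0B)) eqxx /=; apply/forall_inP => j jB; apply/forall_inP => j' j'B.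
    by rewrite -(eqP (eq_i j jB)) -(eqP (eq_i j' j'B)).
  by apply/forall_inP => j jB; exact: (forall_inP (const_t j0 j0B) j jB).
under eq_bigr do rewrite all_eqE.
case: [forall j in B, _]; last by rewrite big1 // => i _; rewrite andbF.
rewrite (eq_bigr (fun i => 1 * delta R i (t j0))) ?sum_delta // => i _.
by rewrite andbT mul1r.
Qed.

Lemma tauP_deltas (R : realType) (I : finType) (c : R) P (t : 'I_n -> I) : Part P ->
  tauP P (fun _ => c) (deltas R t)
  = (\prod_(B in P) c ^ (1 - #|B|%:Z)) * (kerset (pblock P) \subset kerset t)%:R.
Proof.
move=> P_part; rewrite /tauP (eq_bigr _ (fun B BP => tau_block_deltas c t _)).
  by rewrite big_split /= prod_nat_bool blocks_constantE.
by move=> B BP; case/PartP: P_part => _ _; apply: contraNneq => B0; rewrite -B0.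
Qed.

End Refinement.

(** * The families [Psi a] *)

Section PsiCongruent.
Variables (R : realType) (n : nat).

Section Push.
Variables (I I' : finType) (K : I -> I' -> R).

Lemma sum_push x : markov K -> \sum_i' push K x i' = \sum_i x i.
Proof.
case=> _ K_sum1; rewrite /push exchange_big /=.
by apply: eq_bigr => i _; rewrite -mulr_suml K_sum1 mul1r.
Qed.

Lemma push_congruent (kappa : I' -> I) x i' :
  (forall i i', kappa i' != i -> K i i' = 0) -> push K x i' = K (kappa i') i' * x (kappa i').
Proof.
move=> K_kappa; rewrite /push (bigD1 (kappa i')) //= big1 ?addr0 // => i neq.
by rewrite K_kappa ?mul0r // eq_sym.
Qed.

Lemma norm1_push mu : markov K -> posm mu -> norm1 (push K mu) = norm1 mu.
Proof.
move=> K_markov mu_pos.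
have push_ge0 i' : 0 <= push K mu i'.
  case: K_markov => K_ge0 _; apply: sumr_ge0 => i _.
  exact: mulr_ge0 (K_ge0 i i') (ltW (mu_pos i)).
rewrite /norm1 (eq_bigr _ (fun i' _ => ger0_norm (push_ge0 i'))).
by rewrite (eq_bigr _ (fun i _ => gtr0_norm (mu_pos i))) sum_push.
Qed.

Lemma tau_block_push mu (B : {set 'I_n}) V :
  markov K -> congruent_kernel K -> posm (push K mu) ->
  tau_block (push K mu) B (fun j => push K (V j)) = tau_block mu B V.
Proof.
move=> K_markov [kappa K_kappa] push_pos; rewrite /tau_block -(sum_push _ K_markov).
apply: eq_bigr => i' _; rewrite !(push_congruent _ _ K_kappa).
under eq_bigr do rewrite (push_congruent _ _ K_kappa).
have K_neq0 : K (kappa i') i' != 0.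
  by apply: contraTneq (push_pos i') => K0; rewrite (push_congruent _ _ K_kappa) K0 mul0r ltxx.
(* the weight [k] of [kappa i'] in [i'] enters as [k ^ (1 - #|B|) * k ^+ #|B| = k] *)
rewrite big_split /= prodr_const expfzMl mulrACA; set k := K (kappa i') i'.
by rewrite -[k ^+ _]/(k ^ #|B|%:Z) -expfzDr // subrK expr1z.
Qed.

End Push.

Lemma Psi_congruent (a : {set {set 'I_n}} -> R -> R) : congruent_family (Psi a).
Proof.
move=> I I' K K_markov K_congr push_pos mu V mu_pos.
rewrite /Psi norm1_push //; apply: eq_bigr => P _; congr (_ * _).
by apply: eq_bigr => B _; exact: tau_block_push (push_pos _ mu_pos).
Qed.

End PsiCongruent.

Section Multilinear.
Variables (R : realType) (n : nat) (I : finType) (mu : I -> R).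
Variables (V : 'I_n -> I -> R) (j : 'I_n) (a b : R) (W W' : I -> R).

Lemma tau_block_upd_notin (B : {set 'I_n}) X :
  j \notin B -> tau_block mu B (upd V j X) = tau_block mu B V.
Proof.
move=> jNB; apply: eq_bigr => i _; congr (_ * _); apply: eq_bigr => k kB.
by rewrite /upd; case: eqP => // ekj; rewrite -ekj kB in jNB.
Qed.

Lemma tau_block_upd_linear (B : {set 'I_n}) : j \in B ->
  tau_block mu B (upd V j (fun i => a * W i + b * W' i))
  = a * tau_block mu B (upd V j W) + b * tau_block mu B (upd V j W').
Proof.
move=> jB; rewrite /tau_block !mulr_sumr -big_split; apply: eq_bigr => i _.
have others X : \prod_(k in B | k != j) upd V j X k i = \prod_(k in B | k != j) V k i.
  by apply: eq_bigr => k /andP [_ /negbTE kj]; rewrite /upd kj.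
by rewrite !(bigD1 j jB) /= !others /upd eqxx; ring.
Qed.

Lemma tauP_upd_linear (P : {set {set 'I_n}}) : Part P ->
  tauP P mu (upd V j (fun i => a * W i + b * W' i))
  = a * tauP P mu (upd V j W) + b * tauP P mu (upd V j W').
Proof.
move=> P_part; rewrite /tauP !(bigD1 _ (pblock_memT j P_part)) /=.
have others X : \prod_(B in P | B != pblock P j) tau_block mu B (upd V j X)
              = \prod_(B in P | B != pblock P j) tau_block mu B V.
  apply: eq_bigr => B /andP [BP neq]; apply: tau_block_upd_notin.
  by apply: contra neq => jB; rewrite (Part_pblock P_part BP jB).
by rewrite tau_block_upd_linear ?mem_pblockT // !others; ring.
Qed.

End Multilinear.

Lemma Psi_multilinear (R : realType) n (a : {set {set 'I_n}} -> R -> R) :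
  multilinear_family (Psi a).
Proof.
move=> I mu _ V j a' b W W'; rewrite /Psi !mulr_sumr -big_split /=.
by apply: eq_bigr => P P_part; rewrite tauP_upd_linear //; ring.
Qed.

Definition sub_family (R : realType) n (Th Th' : tfamily R n) : tfamily R n :=
  fun I mu V => Th I mu V - Th' I mu V.

Lemma sub_family_multilinear (R : realType) n (Th Th' : tfamily R n) :
  multilinear_family Th -> multilinear_family Th' -> multilinear_family (sub_family Th Th').
Proof.
by move=> Th_ml Th'_ml I mu mu_pos V j a b W W'; rewrite /sub_family Th_ml // Th'_ml //; ring.
Qed.

Lemma sub_family_congruent (R : realType) n (Th Th' : tfamily R n) :
  congruent_family Th -> congruent_family Th' -> congruent_family (sub_family Th Th').
Proof. by move=> Th_congr Th'_congr I I' K *; rewrite /sub_family Th_congr // Th'_congr. Qed.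

(** * Triangular systems *)

Section TriangularSystem.
Variables (G : zmodType) (T : finType) (D : pred T) (le : rel T) (h : T -> nat).
Hypothesis le_refl : {in D, reflexive le}.
Hypothesis h_lt : {in D &, forall P Q, le P Q -> P != Q -> (h P < h Q)%N}.

Fixpoint triangular_iter (f : T -> G) (d : nat) (Q : T) : G :=
  if d is d'.+1 then f Q - \sum_(P | D P && le P Q && (P != Q)) triangular_iter f d' P
  else 0.

Definition triangular_solve f := triangular_iter f (\max_Q h Q).+1.

Lemma triangular_iter_stable f d Q :
  D Q -> (h Q < d)%N -> triangular_iter f d.+1 Q = triangular_iter f d Q.
Proof.
elim: d Q => // d IH Q DQ hQ /=; congr (_ - _).
apply: eq_bigr => P /andP [/andP [DP lePQ] neq]; apply: IH => //.
exact: leq_trans (h_lt DP DQ lePQ neq) hQ.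
Qed.

Lemma triangular_solveP f Q : D Q -> \sum_(P | D P && le P Q) triangular_solve f P = f Q.
Proof.
move=> DQ; rewrite (bigD1 Q) /=; last by rewrite DQ le_refl.
rewrite {1}/triangular_solve /= [X in _ + X](eq_bigr (triangular_iter f (\max_Q h Q))) ?subrK //.
move=> P /andP [/andP [DP lePQ] neq]; apply: triangular_iter_stable => //.
exact: leq_trans (h_lt DP DQ lePQ neq) (leq_bigmax Q).
Qed.

End TriangularSystem.

(** * Vanishing at uniform measures *)

Section Vanishing.
Variables (R : realType) (n : nat) (D : tfamily R n).
Arguments D : clear implicits.
Hypotheses (D_multilinear : multilinear_family D) (D_congruent : congruent_family D).
Variables (lam : R) (I : finType).
Hypotheses (lam_gt0 : 0 < lam) (I_gt0 : (0 < #|I|)%N).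
Hypothesis D_blocks :
  forall Q, Part Q -> D {set 'I_n} (cI _ lam) (deltas R (pblock Q)) = 0.

Local Notation J := {set 'I_n}.
Local Notation T := (J * I)%type.

Let J_gt0 : (0 < #|J|)%N. Proof. by apply/card_gt0P; exists set0. Qed.
Let T_gt0 : (0 < #|{: T}|)%N. Proof. by rewrite card_prod muln_gt0 J_gt0. Qed.

Definition lifts (t : 'I_n -> J) (g : 'I_n -> T) := [forall j, (g j).1 == t j].

Lemma prod_fibre_deltas (t : 'I_n -> J) (g : {ffun 'I_n -> T}) :
  \prod_j (deltas R t j (g j).1 / #|I|%:R) = #|I|%:R^-1 ^+ n * (lifts t g)%:R.
Proof. by rewrite big_split /= prodr_const card_ord mulrC prod_nat_bool. Qed.

Lemma sum_lifts_gt0 (t : 'I_n -> J) :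
  0 < \sum_(g : {ffun 'I_n -> T}) (lifts t g && (kerset g == kerset t))%:R :> R.
Proof.
have /card_gt0P [x0 _] := I_gt0; pose g0 := [ffun j => (t j, x0)].
have g0_lifts : lifts t g0 && (kerset g0 == kerset t).
  apply/andP; split; first by apply/forallP => j; rewrite ffunE.
  by apply/eqP/setP => -[j j']; rewrite !kersetP !ffunE xpair_eqE eqxx andbT.
rewrite (bigD1 g0) //= g0_lifts; apply: ltr_pwDl => //.
by apply: sumr_ge0 => g _; exact: ler0n.
Qed.

Lemma vanishing_product_deltas (u : 'I_n -> T) : D T (cI T lam) (deltas R u) = 0.
Proof.
have [k] := ubnP #|kerset u|; elim: k u => // k IH u /ltnSE le_u_k.
set t := pblock (preim_partition u [set: 'I_n]); set X := D T (cI T lam) (deltas R u).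
have ker_t : kerset t = kerset u := kerset_preim_partition u.
(* Pushing [deltas t] along [J -> J x I] averages over the tuples [g] lifting [t]:
   those with the kernel of [u] give [X], the strictly finer ones give 0 by induction. *)
have liftE (g : {ffun 'I_n -> T}) : lifts t g ->
    D T (cI T lam) (deltas R g) = (kerset g == kerset u)%:R * X.
  move=> /forallP g_lifts; have ker_g : kerset g \subset kerset u.
    rewrite -ker_t (_ : t = fst \o g) ?kerset_comp //.
    by apply: funext => j; rewrite /= (eqP (g_lifts j)).
  have [eq_ker|neq] := eqVneq (kerset g) (kerset u).
    by rewrite mul1r; apply: congruent_deltas_kerset.
  by rewrite mul0r IH // (leq_trans _ le_u_k) // proper_card // properEneq neq ker_g.
have := D_blocks (preim_partitionP u _).
rewrite -(congruent_fibre I_gt0 (card_fibre_fst I) _ D_congruent (posm_cI lam_gt0 J_gt0)).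
rewrite (cI_fibre _ _ (card_prod _ _)) (multilinear_expand D_multilinear (posm_cI lam_gt0 T_gt0)).
rewrite (eq_bigr (fun g : {ffun 'I_n -> T} =>
  #|I|%:R^-1 ^+ n * X * (lifts t g && (kerset g == kerset t))%:R)).
  rewrite -mulr_sumr => /eqP; rewrite mulf_eq0 (gt_eqF (sum_lifts_gt0 t)) orbF mulf_eq0.
  by rewrite expf_eq0 invr_eq0 pnatr_eq0 (negbTE (lt0n_neq0 I_gt0)) andbF => /eqP.
move=> g _; rewrite prod_fibre_deltas ker_t.
case: (boolP (lifts t g)) => [g_lifts|_]; first by rewrite liftE //=; ring.
by rewrite /= !(mulr0, mul0r).
Qed.

Lemma vanishing_product V : D T (cI T lam) V = 0.
Proof.
rewrite (multilinear_expand D_multilinear (posm_cI lam_gt0 T_gt0)) big1 // => g _.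
by rewrite vanishing_product_deltas mulr0.
Qed.

Lemma vanishing_uniform V : D I (cI I lam) V = 0.
Proof.
rewrite -(congruent_fibre J_gt0 (@card_fibre_snd J I) V D_congruent (posm_cI lam_gt0 I_gt0)).
by rewrite (cI_fibre _ _ (etrans (card_prod _ _) (mulnC _ _))) vanishing_product.
Qed.

End Vanishing.

Unset Implicit Arguments.

Theorem lemma4p7 (R : realType) (n : nat) (Theta : tfamily R n) :
  tensor_field_family Theta -> congruent_family Theta ->
  exists a : {set {set 'I_n}} -> R -> R,
    congruent_family (Psi a) /\
    (forall (I : finType), (0 < #|I|)%N ->
     forall lam : R, 0 < lam ->
     forall V : 'I_n -> I -> R,
       Theta I (cI I lam) V - Psi a I (cI I lam) V = 0).
Proof.
move=> [Theta_ml _] Theta_congr.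
pose J := {set 'I_n}.
pose w (x : R) (P : {set {set 'I_n}}) := \prod_(B in P) (x / #|J|%:R) ^ (1 - #|B|%:Z).
pose theta (x : R) Q := Theta J (cI J x) (deltas R (pblock Q)).
pose g (x : R) := triangular_solve (@Part n) (@refines n) (fun P => #|kerset (pblock P)|) (theta x).
exists (fun P x => g x P / w x P); split; first exact: Psi_congruent.
move=> I I_gt0 lam lam_gt0 V.
have J_gt0 : (0 < #|J|)%N by apply/card_gt0P; exists set0.
have w_neq0 P : w lam P != 0.
  by apply/prodf_neq0 => B _; rewrite expfz_neq0 // mulf_neq0 ?invr_eq0 ?pnatr_eq0 -?lt0n ?gt_eqF.
apply: (vanishing_uniform (sub_family_multilinear Theta_ml (Psi_multilinear _))
  (sub_family_congruent Theta_congr (Psi_congruent _)) lam_gt0 I_gt0) => Q Q_part.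
rewrite /sub_family /Psi norm1_cI ?ltW //; apply/eqP; rewrite subr_eq0; apply/eqP.
rewrite -[LHS]/(theta lam Q) -(triangular_solveP (fun P _ => subxx _) (@refines_lt n) _ Q_part).
rewrite big_mkcondr /=.
apply: eq_bigr => P P_part; rewrite /cI tauP_deltas // -/(w lam P) -/(refines P Q).
by rewrite mulrA divfK //; case: (refines P Q); rewrite ?mulr1 ?mulr0.
Qed.
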